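(* For all $k,r\ge 0$, every graph in $M^k_r$ is connected and has diameter at most $2^r$.
   Context: Colors are red, blue, green. A $k$-precolored graph is a finite graph together with an assignment of colors to at most $k$ of its vertices. The game $\mathcal{G}^k_r(H)$ on a $k$-precolored graph $H$ starts from the given precoloring and lasts $r$ rounds; in each round Spoiler may erase the colors of some currently colored vertices and then selects a vertex, which Duplicator colors with one of the three colors; after each round at most $k$ vertices may be colored. Duplicator wins if the initial partial coloring and the partial coloring after each round are proper; otherwise Spoiler wins. A subgraph $H'$ of a $k$-precolored graph $H$ is a subgraph of the underlying graph in which every vertex colored in $H'$ has the same color in $H$ (vertices colored in $H$ may be uncolored in $H'$); it is proper if $H'\ne H$ as precolored graphs. $M^k_r$ is the family of all $k$-precolored graphs $H$ such that Spoiler has a winning strategy in $\mathcal{G}^k_r(H)$ while Duplicator has a winning strategy in $\mathcal{G}^k_r(K)$ for every proper subgraph $K$ of $H$. *)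

From mathcomp Require Import all_boot.
Set Implicit Arguments. Unset Strict Implicit. Unset Printing Implicit Defensive.

Definition color := 'I_3.

(* A (partially) precolored finite simple graph whose vertex set is a subset
   [pv] of an ambient finite type [T]. Edges [pe], partial coloring [pc]. *)
Record pgraph (T : finType) := PGraph {
  pv : {set T};
  pe : rel T;
  pc : {ffun T -> option color}
}.

Definition colored (T : finType) (p : {ffun T -> option color}) : {set T} :=
  [set x | p x != None].

Definition wf_pgraph (T : finType) (G : pgraph T) : Prop :=
  (forall x y, pe G x y = pe G y x) /\
  (forall x, ~~ pe G x x) /\
  (forall x y, pe G x y -> x \in pv G /\ y \in pv G) /\
  (forall x, pc G x != None -> x \in pv G).

Definition kprecolored (k : nat) (T : finType) (G : pgraph T) : Prop :=
  wf_pgraph G /\ #|colored (pc G)| <= k.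

Definition subgraph (T : finType) (K H : pgraph T) : Prop :=
  pv K \subset pv H /\
  (forall x y, pe K x y -> pe H x y) /\
  (forall x c, pc K x = Some c -> pc H x = Some c).

Definition same_pgraph (T : finType) (K H : pgraph T) : Prop :=
  pv K = pv H /\ (forall x y, pe K x y = pe H x y) /\ pc K = pc H.

Definition proper_subgraph (T : finType) (K H : pgraph T) : Prop :=
  wf_pgraph K /\ subgraph K H /\ ~ same_pgraph K H.

Definition proper_coloring (T : finType) (e : rel T) (p : {ffun T -> option color}) : Prop :=
  forall x y a b, e x y -> p x = Some a -> p y = Some b -> a <> b.

(* Duplicator colors v with c *)
Definition upd (T : finType) (p : {ffun T -> option color}) (v : T) (c : color)
  : {ffun T -> option color} :=
  [ffun x => if x == v then Some c else p x].

(* Spoiler's legal move from p: erase some colors (giving p'), then select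
   a vertex v of the graph, such that after the round at most k vertices are
   colored. *)
Definition legal_move (k : nat) (T : finType) (G : pgraph T)
  (p p' : {ffun T -> option color}) (v : T) : Prop :=
  (forall x, p' x = p x \/ p' x = None) /\ v \in pv G /\
  (forall c, #|colored (upd p' v c)| <= k).

Fixpoint spoiler_wins (k : nat) (T : finType) (G : pgraph T) (r : nat)
  (p : {ffun T -> option color}) : Prop :=
  ~ proper_coloring (pe G) p \/
  match r with
  | 0 => False
  | r'.+1 => exists p' v, legal_move k G p p' v /\
               forall c, spoiler_wins k G r' (upd p' v c)
  end.

Fixpoint duplicator_wins (k : nat) (T : finType) (G : pgraph T) (r : nat)
  (p : {ffun T -> option color}) : Prop :=
  proper_coloring (pe G) p /\
  match r with
  | 0 => True
  | r'.+1 => forall p' v, legal_move k G p p' v ->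
               exists c, duplicator_wins k G r' (upd p' v c)
  end.

Definition in_M (k r : nat) (T : finType) (H : pgraph T) : Prop :=
  kprecolored k H /\ spoiler_wins k H r (pc H) /\
  (forall K : pgraph T, proper_subgraph K H -> duplicator_wins k K r (pc K)).

Definition pconnected (T : finType) (G : pgraph T) : Prop :=
  forall x y, x \in pv G -> y \in pv G -> connect (pe G) x y.

Definition diameter_le (T : finType) (G : pgraph T) (d : nat) : Prop :=
  forall x y, x \in pv G -> y \in pv G ->
    exists s : seq T, [/\ path (pe G) x s, last x s = y & size s <= d].

From Stdlib Require Import Classical.
From mathcomp Require Import all_boot.

Set Implicit Arguments. Unset Strict Implicit. Unset Printing Implicit Defensive.

(* The idea is to extract from any Spoiler win a small "witness" subgraph.
   Say that K is an r-witness for a graph G with a coloring p if K is a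
   well-formed subgraph of G whose precoloring is a restriction of p, on
   which Spoiler already wins the r-round game, and whose diameter is at
   most 2^r.  By induction on r, Spoiler winning on (G, p) in r rounds
   yields an r-witness:
   - an improper coloring is witnessed by a single monochromatic edge;
   - otherwise Spoiler erases to p' and selects v, and for each answer c
     we get an (r-1)-witness K_c for (G, upd p' v c).  If some K_c avoids
     v it is already an r-witness for (G, p); if all of them contain v,
     their union (colored by p) is an r-witness: Spoiler plays the same
     first move on it and then follows the strategy on K_c, and any two
     vertices are joined through v by two paths of length at most 2^(r-1).
   For H in M^k_r, minimality forces the witness to be H itself. *)

Section Game.

Variables (k : nat) (T : finType).
Implicit Types (G K : pgraph T) (p q : {ffun T -> option color}).

Definition sub_coloring q p : Prop := forall x c, q x = Some c -> p x = Some c.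

Lemma wf_colored_in G x c : wf_pgraph G -> pc G x = Some c -> x \in pv G.
Proof. by case=> _ [_ [_ colG]] Gx; apply: colG; rewrite Gx. Qed.

Lemma spoiler_wins_improper G r p :
  ~ proper_coloring (pe G) p -> spoiler_wins k G r p.
Proof. by case: r => [|r] improper; left. Qed.

Lemma spoiler_wins_S G r p : spoiler_wins k G r p -> spoiler_wins k G r.+1 p.
Proof.
elim: r p => [|r IH] p /=; first by case=> // improper; left.
case=> [improper|[p' [v [legal win]]]]; first by left.
by right; exists p', v; split=> // c; apply: IH.
Qed.

Lemma improper_sub (e e' : rel T) q p :
  subrel e e' -> sub_coloring q p ->
  ~ proper_coloring e q -> ~ proper_coloring e' p.
Proof.
move=> sub_e sub_qp improper proper; apply: improper => x y a b exy qx qy.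
exact: proper x y a b (sub_e _ _ exy) (sub_qp _ _ qx) (sub_qp _ _ qy).
Qed.

(* Spoiler's strategy on a subgraph K started from a restriction q of p is
   also a strategy on G from p: the first erasure additionally removes the
   colors of p that q does not have, and afterwards both games coincide. *)
Lemma spoiler_wins_sub K G r q p :
  pv K \subset pv G -> subrel (pe K) (pe G) -> sub_coloring q p ->
  spoiler_wins k K r q -> spoiler_wins k G r p.
Proof.
move=> sub_v sub_e; elim: r q p => [|r IH] q p sub_qp /=.
  by case=> // improper; left; apply: improper_sub improper.
case=> [improper|[q' [v [[erase [vK legal] win]]]]].
  by left; apply: improper_sub improper.
right; exists q', v; split; last by move=> c; apply: IH (win c).
split; last by split=> //; apply: (subsetP sub_v).
move=> x; case: (erase x) => ->; last by right.
by case qx: (q x) => [c|]; [left; rewrite (sub_qp _ _ qx) | right].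
Qed.

Lemma spoiler_duplicator_excl G r p :
  spoiler_wins k G r p -> duplicator_wins k G r p -> False.
Proof.
elim: r p => [|r IH] p /=; first by case=> // improper [proper _].
case=> [improper [proper _]|[p' [v [legal win]]] [_ dup]]; first exact: improper.
by have [c dup_c] := dup _ _ legal; apply: IH (win c) dup_c.
Qed.

Lemma diameter_le_leq G d d' : d <= d' -> diameter_le G d -> diameter_le G d'.
Proof.
move=> le_dd' diamG x y xG yG; have [s [ps ls sz]] := diamG x y xG yG.
by exists s; split=> //; apply: leq_trans le_dd'.
Qed.

Lemma diameter_connected G d : diameter_le G d -> pconnected G.
Proof.
move=> diamG x y xG yG; have [s [ps ls _]] := diamG x y xG yG.
by apply/connectP; exists s.
Qed.

Definition restrict (A : {set T}) p : {ffun T -> option color} :=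
  [ffun x => if x \in A then p x else None].

Lemma restrictE A p x : restrict A p x = if x \in A then p x else None.
Proof. exact: ffunE. Qed.

Lemma restrict_sub A p : sub_coloring (restrict A p) p.
Proof. by move=> x c; rewrite restrictE; case: (x \in A). Qed.

Lemma restrict_colored_in A p x : restrict A p x != None -> x \in A.
Proof. by rewrite restrictE; case: (x \in A). Qed.

Definition witness G p r K : Prop :=
  [/\ wf_pgraph K, subgraph K (PGraph (pv G) (pe G) p),
      spoiler_wins k K r (pc K) & diameter_le K (2 ^ r)].

Definition edge_pgraph (x y : T) p : pgraph T :=
  PGraph [set x; y]
    (fun u w => ((u == x) && (w == y)) || ((u == y) && (w == x)))
    (restrict [set x; y] p).

Lemma edge_witness G p r x y a :
  wf_pgraph G -> pe G x y -> p x = Some a -> p y = Some a ->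
  witness G p r (edge_pgraph x y p).
Proof.
move=> [symG [irrG [endsG _]]] exy px py.
have neq_xy : x != y by apply: contraTneq exy => <-; apply: irrG.
have [xG yG] := endsG _ _ exy.
split.
- split; first by move=> u w /=; rewrite orbC [(w == y) && _]andbC [(w == x) && _]andbC.
  split; first by move=> u /=; apply/negP => /orP[] /andP[/eqP-> /eqP uv];
    move: neq_xy; rewrite uv eqxx.
  split; first by move=> u w /= /orP[] /andP[/eqP-> /eqP->]; rewrite !inE !eqxx ?orbT.
  by move=> u; apply: restrict_colored_in.
- split; first by apply/subsetP => u; rewrite !inE => /orP[] /eqP->.
  split; last exact: restrict_sub.
  by move=> u w /= /orP[] /andP[/eqP-> /eqP->] //; rewrite symG.
- apply: spoiler_wins_improper => proper; apply: (proper x y a a) => //=.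
  + by rewrite !eqxx.
  + by rewrite ffunE !inE eqxx.
  + by rewrite ffunE !inE eqxx orbT.
- apply: diameter_le_leq (expn_gt0 2 r) _ => u w /=; rewrite !inE.
  case/orP=> /eqP->; case/orP=> /eqP->.
  + by exists [::].
  + by exists [:: y]; rewrite /= !eqxx.
  + by exists [:: x]; rewrite /= !eqxx orbT.
  + by exists [::].
Qed.

Lemma improper_witness G p r :
  wf_pgraph G -> ~ proper_coloring (pe G) p -> exists K, witness G p r K.
Proof.
move=> wfG improper; apply: NNPP => no_witness; apply: improper.
move=> x y a b exy px py eq_ab; apply: no_witness; subst b.
by exists (edge_pgraph x y p); apply: edge_witness wfG exy px py.
Qed.

Lemma witness_avoiding G p p' v c r K :
  (forall x, p' x = p x \/ p' x = None) ->
  witness G (upd p' v c) r K -> v \notin pv K -> witness G p r.+1 K.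
Proof.
move=> erase [wfK [sub_v [sub_e sub_c]] winK diamK] vK; split=> //.
- split=> //; split=> // x c' Kx.
  have xK := wf_colored_in wfK Kx.
  move: (sub_c _ _ Kx); rewrite ffunE; case: eqP => [xv | _].
    by move: vK; rewrite -xv xK.
  by case: (erase x) => [<- | ->].
- exact: spoiler_wins_S.
- by apply: diameter_le_leq diamK; rewrite leq_exp2l.
Qed.

Definition union_pgraph (I : finType) (K : I -> pgraph T) p : pgraph T :=
  PGraph (\bigcup_i pv (K i)) (fun x y => [exists i, pe (K i) x y])
    (restrict (\bigcup_i pv (K i)) p).

Section Union.

Variables (I : finType) (K : I -> pgraph T) (p : {ffun T -> option color}).
Hypothesis wfK : forall i, wf_pgraph (K i).

Lemma union_wf : wf_pgraph (union_pgraph K p).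
Proof.
split; first by move=> x y /=; apply/existsP/existsP => -[i e]; exists i;
  case: (wfK i) => symK _; rewrite symK.
split; first by move=> x /=; rewrite negb_exists; apply/forallP => i;
  case: (wfK i) => _ [irrK _].
split; last by move=> x; apply: restrict_colored_in.
move=> x y /= /existsP[i e]; case: (wfK i) => _ [_ [endsK _]].
by have [xK yK] := endsK _ _ e; split; apply/bigcupP; exists i.
Qed.

Lemma union_subgraph G :
  (forall i, pv (K i) \subset pv G /\ subrel (pe (K i)) (pe G)) ->
  subgraph (union_pgraph K p) (PGraph (pv G) (pe G) p).
Proof.
move=> subK; split; first by apply/bigcupsP => i _; case: (subK i).
split; last exact: restrict_sub.
by move=> x y /= /existsP[i e]; case: (subK i) => _; apply.
Qed.

Lemma union_diameter v d :
  (forall i, v \in pv (K i)) -> (forall i, diameter_le (K i) d) ->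
  diameter_le (union_pgraph K p) (d + d).
Proof.
move=> vK diamK x y /bigcupP[i _ xi] /bigcupP[j _ yj].
have [s1 [path1 last1 size1]] := diamK i x v xi (vK i).
have [s2 [path2 last2 size2]] := diamK j v y (vK j) yj.
have sub_union l : subrel (pe (K l)) (pe (union_pgraph K p)).
  by move=> u w e; apply/existsP; exists l.
exists (s1 ++ s2); split.
- by rewrite cat_path last1 (sub_path (sub_union i)) ?(sub_path (sub_union j)).
- by rewrite last_cat last1.
- by rewrite size_cat leq_add.
Qed.

End Union.

(* If, after Spoiler's move (erase p to p', select v), Spoiler wins on a
   graph K_c containing v against each answer c, then Spoiler wins on the
   union of the K_c by playing the same move and then the strategy on K_c. *)
Lemma union_spoiler_wins p p' v r (K : color -> pgraph T) :
  (forall x, p' x = p x \/ p' x = None) ->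
  (forall c, #|colored (upd p' v c)| <= k) ->
  (forall c, wf_pgraph (K c)) -> (forall c, v \in pv (K c)) ->
  (forall c, sub_coloring (pc (K c)) (upd p' v c)) ->
  (forall c, spoiler_wins k (K c) r (pc (K c))) ->
  spoiler_wins k (union_pgraph K p) r.+1 (pc (union_pgraph K p)).
Proof.
move=> erase legal wfK vK subK winK; right.
exists (restrict (\bigcup_c pv (K c)) p'), v; split.
  split; first by move=> x; rewrite /= !ffunE; case: (x \in _); [apply: erase | right].
  split; first by apply/bigcupP; exists ord0.
  move=> c; apply: leq_trans (legal c); apply/subset_leq_card/subsetP => x.
  by rewrite !inE !ffunE; case: (x == v); last case: (x \in _).
move=> c; apply: spoiler_wins_sub (winK c).
- exact: (bigcup_sup c).
- by move=> x y e; apply/existsP; exists c.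
- move=> x c' Kx; have xV : x \in \bigcup_c pv (K c).
    by apply/bigcupP; exists c => //; apply: wf_colored_in Kx.
  by move: (subK _ _ _ Kx); rewrite !ffunE xV.
Qed.

Lemma witness_exists G r p :
  wf_pgraph G -> spoiler_wins k G r p -> exists K, witness G p r K.
Proof.
move=> wfG; elim: r p => [|r IH] p /=.
  by case=> // improper; apply: improper_witness.
case=> [improper|[p' [v [[erase [_ legal]] win]]]].
  exact: improper_witness.
have [K witK] := fin_all_exists (fun c => IH _ (win c)).
case: (boolP [exists c, v \notin pv (K c)]) => [/existsP[c vKc] | /existsPn vK].
  by exists (K c); apply: witness_avoiding (witK c) vKc.
have {}vK c : v \in pv (K c) by move: (vK c); rewrite negbK.
have wfK c : wf_pgraph (K c) by case: (witK c).
exists (union_pgraph K p); split.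
- exact: union_wf.
- by apply: union_subgraph => c; case: (witK c) => _ [sub_v [sub_e _]].
- apply: union_spoiler_wins erase legal wfK vK _ _ => c; case: (witK c) => //.
  by move=> _ [_ [_ sub_c]].
- rewrite expnS mul2n -addnn; apply: union_diameter vK _ => c.
  by case: (witK c).
Qed.

End Game.

Theorem lemma6 (k r : nat) (T : finType) (H : pgraph T) :
  in_M k r H -> pconnected H /\ diameter_le H (2 ^ r).
Proof.
move=> [[wfH _] [winH minimalH]].
have [K [wfK subKH winK diamK]] := witness_exists wfH winH.
have [eq_v [eq_e _]] : same_pgraph K H.
  apply: NNPP => neqKH; apply: spoiler_duplicator_excl winK _.
  by apply: minimalH; split=> //; split=> //; case: H {wfH winH minimalH neqKH} subKH.
have diamH : diameter_le H (2 ^ r).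
  move=> x y; rewrite -eq_v => xK yK; have [s [ps ls sz]] := diamK x y xK yK.
  by exists s; split=> //; rewrite -(eq_path eq_e).
by split=> //; apply: diameter_connected diamH.
Qed.
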